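(* On the trivial homogeneous $\mathrm{U}(1)$-principal bundle $P=V^{5,2}\times\mathrm{U}(1)$ over $V^{5,2}=\mathrm{SO}(5)/\mathrm{SO}(3)$ (induced by the trivial homomorphism $\mathrm{SO}(3)\to\mathrm{U}(1)$), the $\mathrm{SO}(5)$-invariant connections are exactly those corresponding to the linear maps $\beta:\mathfrak{so}(5)\to\mathfrak u(1)$ of the form $\beta=a_1\,e^1\otimes u$, $a_1\in\mathbb{R}$, where $u$ is a fixed generator of $\mathfrak u(1)\cong\mathbb{R}$. Furthermore, the curvature of such a connection lies in $\Omega^2_1$, i.e. is a constant multiple of the invariant 2-form $\omega$ corresponding to $e^{25}+e^{36}+e^{47}$, tensored with $u$.
   Context: Basis of $\mathfrak{so}(5)$ (with $E_{ij}$ the elementary $5\times5$ matrices): $e_1=E_{12}-E_{21}$, $e_2=E_{13}-E_{31}$, $e_3=E_{14}-E_{41}$, $e_4=E_{15}-E_{51}$, $e_5=E_{23}-E_{32}$, $e_6=E_{24}-E_{42}$, $e_7=E_{25}-E_{52}$, $e_8=E_{34}-E_{43}$, $e_9=E_{35}-E_{53}$, $e_{10}=E_{54}-E_{45}$; bracket = commutator. $\mathrm{SO}(3)\subset\mathrm{SO}(5)$ has Lie algebra $\mathrm{span}\{e_8,e_9,e_{10}\}$; $e^i$ dual basis. For a homomorphism $\phi:H\to K$, $G$-invariant connections on $G\times_\phi K\to G/H$ correspond bijectively to linear maps $\alpha:\mathfrak g\to\mathfrak k$ with $\alpha|_{\mathfrak h}=\phi_*$ and $\alpha\circ\mathrm{Ad}(h)=\mathrm{Ad}(\phi(h))\circ\alpha$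 for $h\in H$. The curvature is the invariant form given on $\mathfrak m=\mathrm{span}\{e_1,\dots,e_7\}$ by $F(X,Y)=[\alpha X,\alpha Y]-\alpha([X,Y])$. $\Omega^2_1$ denotes 2-forms $f\,\omega$ with $\omega=e^{25}+e^{36}+e^{47}$. *)

(* so(5) is modelled as the skew-symmetric 5x5 matrices over a
   real field R (R = the reals being the intended instance); u(1) ~ R. *)
From HB Require Import structures.
From mathcomp Require Import all_boot all_order all_algebra.
Set Implicit Arguments. Unset Strict Implicit. Unset Printing Implicit Defensive.
Import Order.TTheory GRing.Theory Num.Theory.
Local Open Scope ring_scope.

Section SO5.
Variable R : realFieldType.

Definition skew5 (X : 'M[R]_5) : Prop := X^T = - X.

Definition br5 (X Y : 'M[R]_5) : 'M[R]_5 := X *m Y - Y *m X.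

Definition i0 : 'I_5 := @Ordinal 5 0 isT.
Definition i1 : 'I_5 := @Ordinal 5 1 isT.
Definition i2 : 'I_5 := @Ordinal 5 2 isT.
Definition i3 : 'I_5 := @Ordinal 5 3 isT.
Definition i4 : 'I_5 := @Ordinal 5 4 isT.

Definition Ek (i j : 'I_5) : 'M[R]_5 := delta_mx i j - delta_mx j i.

(* basis e_1, ..., e_10 (indexed 1..10; index 0 unused, mapped to 0) *)
Definition ebasis (k : nat) : 'M[R]_5 :=
  match k with
  | 1 => Ek i0 i1 | 2 => Ek i0 i2 | 3 => Ek i0 i3 | 4 => Ek i0 i4
  | 5 => Ek i1 i2 | 6 => Ek i1 i3 | 7 => Ek i1 i4
  | 8 => Ek i2 i3 | 9 => Ek i2 i4 | 10 => Ek i4 i3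
  | _ => 0
  end.

(* dual basis e^1, ..., e^10 evaluated on X in so(5): the coordinates of X *)
Definition edual (k : nat) (X : 'M[R]_5) : R :=
  match k with
  | 1 => X i0 i1 | 2 => X i0 i2 | 3 => X i0 i3 | 4 => X i0 i4
  | 5 => X i1 i2 | 6 => X i1 i3 | 7 => X i1 i4
  | 8 => X i2 i3 | 9 => X i2 i4 | 10 => X i4 i3
  | _ => 0
  end.

(* h = so(3) = span{e8,e9,e10};  m = span{e1,...,e7} *)
Definition in_h (X : 'M[R]_5) : Prop :=
  skew5 X /\ forall k, (1 <= k <= 7)%N -> edual k X = 0.
Definition in_m (X : 'M[R]_5) : Prop :=
  skew5 X /\ forall k, (8 <= k <= 10)%N -> edual k X = 0.

Definition inSO3 (g : 'M[R]_3) : Prop := g^T *m g = 1%:M /\ \det g = 1.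
Definition embSO3 (g : 'M[R]_3) : 'M[R]_5 := @block_mx R 2 3 2 3 1%:M 0 0 g.

Definition Ad5 (h X : 'M[R]_5) : 'M[R]_5 := h *m X *m invmx h.

Definition linear_on_so5 (alpha : 'M[R]_5 -> R) : Prop :=
  forall (a : R) X Y, skew5 X -> skew5 Y ->
    alpha (a *: X + Y) = a * alpha X + alpha Y.

(* Wang's condition for phi : SO(3) -> U(1) trivial: phi_* = 0 and
   alpha o Ad(h) = Ad(phi h) o alpha = alpha (Ad of the identity of U(1)). *)
Definition inv_conn_trivial (alpha : 'M[R]_5 -> R) : Prop :=
  linear_on_so5 alpha /\
  (forall X, in_h X -> alpha X = 0) /\
  (forall g X, inSO3 g -> skew5 X -> alpha (Ad5 (embSO3 g) X) = alpha X).

(* curvature F(X,Y) = [alpha X, alpha Y]_{u(1)} - alpha([X,Y]);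
   the bracket of u(1) (as a subalgebra of gl(1)) is the commutator *)
Definition curv (alpha : 'M[R]_5 -> R) (X Y : 'M[R]_5) : R :=
  (alpha X * alpha Y - alpha Y * alpha X) - alpha (br5 X Y).

Definition wedge (i j : nat) (X Y : 'M[R]_5) : R :=
  edual i X * edual j Y - edual j X * edual i Y.
Definition omega (X Y : 'M[R]_5) : R := wedge 2 5 X Y + wedge 3 6 X Y + wedge 4 7 X Y.

End SO5.

From HB Require Import structures.
From mathcomp Require Import all_boot all_order all_algebra.
From mathcomp Require Import ring.
Set Implicit Arguments. Unset Strict Implicit. Unset Printing Implicit Defensive.
Import Order.TTheory GRing.Theory Num.Theory.
Local Open Scope ring_scope.

(* A Wang-invariant beta is determined by its values on the basis.  It kills
   so(3) = span{e8, e9, e10} by hypothesis, and each mixed vector e2..e7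
   (an E_ab with a < 2 <= b) is negated by conjugation with the image of a
   diagonal sign matrix diag(d) in SO(3) with d_b = -1; hence
   beta = beta(e1) e^1.  Conversely e^1 only reads the upper-left 2x2 block,
   which conjugation by the block matrix diag(1, g) leaves untouched.  Since
   u(1) is abelian, F(X, Y) = - beta([X, Y]), and for skew X, Y the entry
   [X, Y]_12 equals -(e^25 + e^36 + e^47)(X, Y). *)

Lemma eq_oppr_eq0 (R : numDomainType) (x : R) : x = - x -> x = 0.
Proof. by move/eqP; rewrite -addr_eq0 -mulr2n mulrn_eq0 => /orP[|/eqP]. Qed.

Section SkewMatrix.
Variables (R : numDomainType) (n : nat) (A : 'M[R]_n).
Hypothesis skA : A^T = - A.

Lemma skew_entryE i j : A j i = - A i j.
Proof. by have := congr1 (fun M : 'M_n => M i j) skA; rewrite !mxE. Qed.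

Lemma skew_diag_eq0 i : A i i = 0.
Proof. exact/eq_oppr_eq0/skew_entryE. Qed.

End SkewMatrix.

Section BlockConjugation.
Variables (R : pzRingType) (m n : nat).

Lemma ulsubmx_block1_conj (A B : 'M[R]_n) (X : 'M[R]_(m + n)) :
  ulsubmx (block_mx 1%:M 0 0 A *m X *m block_mx 1%:M 0 0 B) = ulsubmx X.
Proof.
rewrite -[X]submxK !mulmx_block !mul1mx !mulmx1 !mul0mx !mulmx0.
by rewrite !addr0 !add0r !block_mxKul.
Qed.

Lemma block1_orthogonal (g : 'M[R]_n) : g^T *m g = 1%:M ->
  (block_mx 1%:M 0 0 g : 'M[R]_(m + n))^T *m block_mx 1%:M 0 0 g = 1%:M.
Proof.
move=> gg; rewrite tr_block_mx trmx1 !trmx0 mulmx_block gg.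
by rewrite !mulmx0 !mul0mx !mulmx1 !addr0 !add0r -scalar_mx_block.
Qed.

End BlockConjugation.

Lemma invmx_orthogonal (R : comUnitRingType) n (A : 'M[R]_n) :
  A^T *m A = 1%:M -> invmx A = A^T.
Proof.
move=> AA; have [_ uA] := mulmx1_unit AA.
by rewrite -[RHS](mulmxK uA) AA mul1mx.
Qed.

Lemma diag_mx_conj_delta (R : comPzRingType) n (d : 'rV[R]_n) i j :
  diag_mx d *m delta_mx i j *m diag_mx d = (d 0 i * d 0 j) *: delta_mx i j.
Proof.
rewrite mul_diag_mx mul_mx_diag; apply/matrixP => a b; rewrite !mxE.
by case: (eqVneq a i) => [->|]; case: (eqVneq b j) => [->|] //=;
  rewrite ?mulr0 ?mul0r ?mulr1.
Qed.

Lemma diag_mx_conj_delta_skew (R : comPzRingType) n (d : 'rV[R]_n) i j :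
  diag_mx d *m (delta_mx i j - delta_mx j i) *m diag_mx d
    = (d 0 i * d 0 j) *: (delta_mx i j - delta_mx j i).
Proof.
by rewrite mulmxBr mulmxBl !diag_mx_conj_delta scalerBr [d 0 j * _]mulrC.
Qed.

Lemma ord5P (i : 'I_5) : [\/ i = i0, i = i1, i = i2 | i = i3 \/ i = i4].
Proof.
case: i => [[|[|[|[|[|//]]]]] hi];
  [constructor 1 | constructor 2 | constructor 3 | constructor 4; left
  | constructor 4; right]; exact: val_inj.
Qed.

Lemma sum_ord5 (V : nmodType) (F : 'I_5 -> V) :
  \sum_k F k = F i0 + F i1 + F i2 + F i3 + F i4.
Proof.
rewrite (bigD1 i0) // (bigD1 i1) // (bigD1 i2) // (bigD1 i3) // (bigD1 i4) //=.
by rewrite big1 ?addr0 ?addrA // => k; case: (ord5P k) => [||| []] ->.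
Qed.

Section SO5.
Variable R : realFieldType.
Local Notation E := (Ek R).

Lemma skew5_0 : skew5 (0 : 'M[R]_5).
Proof. by rewrite /skew5 trmx0 oppr0. Qed.

Lemma skew5_add (X Y : 'M[R]_5) : skew5 X -> skew5 Y -> skew5 (X + Y).
Proof. by rewrite /skew5 => hX hY; rewrite linearD /= hX hY opprD. Qed.

Lemma skew5_scale a (X : 'M[R]_5) : skew5 X -> skew5 (a *: X).
Proof. by rewrite /skew5 => hX; rewrite linearZ /= hX scalerN. Qed.

Lemma skew5_Ek i j : skew5 (E i j).
Proof. by rewrite /skew5 /Ek linearB /= !trmx_delta opprB. Qed.

Lemma skew5_ebasis k : skew5 (ebasis R k).
Proof. by do 11?[case: k => [|k]]; first [exact: skew5_0 | exact: skew5_Ek]. Qed.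

Lemma skew5_br5 (X Y : 'M[R]_5) : skew5 X -> skew5 Y -> skew5 (br5 X Y).
Proof.
rewrite /skew5 /br5 => hX hY; rewrite linearB /= !trmx_mul hX hY.
by rewrite !mulmxN !mulNmx !opprK opprB.
Qed.

Lemma edual1_ulsubmx (X : 'M[R]_(2 + 3)) :
  edual 1 X = ulsubmx X ord0 ord_max.
Proof. by rewrite /edual !mxE; congr (X _ _); apply: val_inj. Qed.

Lemma embSO3_tr (g : 'M[R]_3) : (embSO3 g)^T = embSO3 g^T.
Proof. by rewrite /embSO3 (@tr_block_mx _ 2 3 2 3) trmx1 !trmx0. Qed.

Lemma Ad5_embSO3 (g : 'M[R]_3) X : inSO3 g ->
  Ad5 (embSO3 g) X = embSO3 g *m X *m embSO3 g^T.
Proof.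
case=> gg _; have embO : (embSO3 g)^T *m embSO3 g = 1%:M.
  exact: (@block1_orthogonal _ 2 3 g gg).
by rewrite /Ad5 invmx_orthogonal // embSO3_tr.
Qed.

Lemma edual1_Ad5_embSO3 (g : 'M[R]_3) X : inSO3 g ->
  edual 1 (Ad5 (embSO3 g) X) = edual 1 X.
Proof. by move=> hg; rewrite Ad5_embSO3 // !edual1_ulsubmx ulsubmx_block1_conj. Qed.

Lemma skew5_Ad5_embSO3 (g : 'M[R]_3) X : inSO3 g -> skew5 X ->
  skew5 (Ad5 (embSO3 g) X).
Proof.
move=> hg hX; rewrite /skew5 Ad5_embSO3 // !trmx_mul !embSO3_tr trmxK hX.
by rewrite mulNmx mulmxN mulmxA.
Qed.

Lemma embSO3_diag (d : 'rV[R]_3) :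
  embSO3 (diag_mx d) = diag_mx (row_mx (const_mx 1 : 'rV[R]_2) d).
Proof. by rewrite /embSO3 (@diag_mx_row _ 3 2) diag_const_mx. Qed.

Definition flip_except (c : 'I_3) : 'rV[R]_3 := \row_j (if j == c then 1 else -1).

Lemma inSO3_flip_except c : inSO3 (diag_mx (flip_except c)).
Proof.
split.
  rewrite tr_diag_mx mul_diag_mx; apply/matrixP => i j; rewrite !mxE mulrnAr.
  by case: (i == c); rewrite ?mulr1 ?mulrNN ?mulr1.
rewrite det_diag (bigD1 c) //= mxE eqxx mul1r.
rewrite (eq_bigr (fun=> -1)) => [|j /negPf]; last by rewrite mxE => ->.
by rewrite prodr_const cardC1 card_ord expr2 mulrNN mulr1.
Qed.

Lemma Ad5_flip_except_mixed (c b : 'I_3) (a : 'I_2) : c != b ->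
  Ad5 (embSO3 (diag_mx (flip_except c))) (E (lshift 3 a) (rshift 2 b))
    = - E (lshift 3 a) (rshift 2 b).
Proof.
move=> ncb; rewrite (Ad5_embSO3 _ (inSO3_flip_except c)) tr_diag_mx.
rewrite embSO3_diag diag_mx_conj_delta_skew.
rewrite (@row_mxEl _ 1 2 3) (@row_mxEr _ 1 2 3) !mxE.
by rewrite eq_sym (negPf ncb) mul1r scaleN1r.
Qed.

Lemma skew5_decomp (X : 'M[R]_5) : skew5 X ->
  X = \sum_(1 <= k < 11) edual k X *: ebasis R k.
Proof.
move=> hX; have skX := skew_entryE hX; have dX := skew_diag_eq0 hX.
apply/matrixP => i j; rewrite summxE /index_iota /= !big_cons big_nil !mxE.
case: (ord5P i) => [||| []] ->; case: (ord5P j) => [||| []] ->;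
  rewrite /= ?mulr1n ?mulr0n ?subr0 ?sub0r ?mulr0 ?mulr1 ?add0r ?addr0.
all: by rewrite ?dX // skX mulrN1.
Qed.

Lemma ebasis_mixed k : (2 <= k <= 7)%N ->
  exists i j : 'I_5, [/\ (i < 2)%N, (2 <= j)%N & ebasis R k = E i j].
Proof.
case: k => [|[|[|[|[|[|[|[|k]]]]]]]] // _;
  [exists i0, i2 | exists i0, i3 | exists i0, i4
  | exists i1, i2 | exists i1, i3 | exists i1, i4]; by [].
Qed.

Lemma ebasis_in_h k : (8 <= k <= 10)%N -> in_h (ebasis R k).
Proof.
move=> hk; split=> [|l /andP[l1 l7]]; first exact: skew5_ebasis.
case: k hk => [|[|[|[|[|[|[|[|[|[|[|k]]]]]]]]]]] // _;
  case: l l1 l7 => [|[|[|[|[|[|[|[|l]]]]]]]] // _ _;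
  by rewrite /edual !mxE /= subrr.
Qed.

Lemma edual1_br5 (X Y : 'M[R]_5) : skew5 X -> skew5 Y ->
  edual 1 (br5 X Y) = - omega X Y.
Proof.
move=> hX hY; have skX := skew_entryE hX; have skY := skew_entryE hY.
rewrite /omega /wedge /edual /br5 !mxE !sum_ord5.
rewrite !(skew_diag_eq0 hX) !(skew_diag_eq0 hY).
rewrite (skX i1 i2) (skX i1 i3) (skX i1 i4) (skY i1 i2) (skY i1 i3) (skY i1 i4).
ring.
Qed.

Section LinearOnSo5.
Variable alpha : 'M[R]_5 -> R.
Hypothesis hlin : linear_on_so5 alpha.

Lemma linear_on_so5_0 : alpha 0 = 0.
Proof.
have := hlin 1 skew5_0 skew5_0; rewrite scale1r addr0 mul1r => h.
by apply: (addrI (alpha 0)); rewrite addr0 -h.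
Qed.

Lemma linear_on_so5_Z a X : skew5 X -> alpha (a *: X) = a * alpha X.
Proof.
move=> hX; rewrite -[a *: X]addr0 hlin ?linear_on_so5_0 ?addr0 //.
exact: skew5_0.
Qed.

Lemma linear_on_so5_sum (I : Type) (r : seq I) (c : I -> R) (Y : I -> 'M[R]_5) :
  (forall i, skew5 (Y i)) ->
  alpha (\sum_(i <- r) c i *: Y i) = \sum_(i <- r) c i * alpha (Y i).
Proof.
move=> hY; elim: r => [|i r IH]; first by rewrite !big_nil linear_on_so5_0.
rewrite !big_cons hlin ?IH //.
apply: big_ind => [|A B|k _]; first exact: skew5_0; first exact: skew5_add.
exact: skew5_scale.
Qed.

Lemma linear_on_so5_coord X : skew5 X ->
  alpha X = \sum_(1 <= k < 11) edual k X * alpha (ebasis R k).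
Proof.
move=> hX; rewrite {1}(skew5_decomp hX) linear_on_so5_sum //.
exact: skew5_ebasis.
Qed.

Hypothesis hinv :
  forall g X, inSO3 g -> skew5 X -> alpha (Ad5 (embSO3 g) X) = alpha X.

Lemma Ad5_invariant_Ek_mixed_eq0 (i j : 'I_5) :
  (i < 2)%N -> (2 <= j)%N -> alpha (E i j) = 0.
Proof.
move=> hi hj; have hj3 : (j - 2 < 3)%N by rewrite ltn_subLR.
have -> : i = lshift 3 (Ordinal hi) by exact: val_inj.
have -> : j = rshift 2 (Ordinal hj3) by apply: val_inj; rewrite /= subnKC.
move: (Ordinal hi) (Ordinal hj3) => a b.
pose c : 'I_3 := if b == ord0 then ord_max else ord0.
have ncb : c != b by rewrite /c; case: (eqVneq b ord0) => [->|] //; rewrite eq_sym.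
apply: eq_oppr_eq0.
rewrite -[LHS](hinv (inSO3_flip_except c) (skew5_Ek _ _)) Ad5_flip_except_mixed //.
by rewrite -scaleN1r linear_on_so5_Z ?mulN1r //; apply: skew5_Ek.
Qed.

End LinearOnSo5.

Lemma inv_conn_trivial_edual1 (alpha : 'M[R]_5 -> R) :
  inv_conn_trivial alpha ->
  forall X, skew5 X -> alpha X = edual 1 X * alpha (ebasis R 1).
Proof.
case=> hlin [hh hinv] X hX; rewrite (linear_on_so5_coord hlin hX) big_ltn //.
rewrite big_nat_cond big1 ?addr0 // => k /andP[/andP[k2 k11] _].
have [k7|k8] := leqP k 7.
  have /ebasis_mixed[i [j [hi hj ->]]] : (2 <= k <= 7)%N by rewrite k2.
  by rewrite (Ad5_invariant_Ek_mixed_eq0 hlin hinv hi hj) mulr0.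
by rewrite hh ?mulr0 //; apply: ebasis_in_h; rewrite k8 -ltnS.
Qed.

Lemma edual1_multiple_inv_conn_trivial (alpha : 'M[R]_5 -> R) c :
  linear_on_so5 alpha ->
  (forall X, skew5 X -> alpha X = c * edual 1 X) -> inv_conn_trivial alpha.
Proof.
move=> hlin hA; split=> //; split=> [X [hX hm]|g X hg hX].
  by rewrite hA // (hm 1%N isT) mulr0.
by rewrite !hA ?edual1_Ad5_embSO3 //; apply: skew5_Ad5_embSO3.
Qed.

Lemma curv_edual1 (alpha : 'M[R]_5 -> R) c X Y :
  (forall Z, skew5 Z -> alpha Z = c * edual 1 Z) -> skew5 X -> skew5 Y ->
  curv alpha X Y = c * omega X Y.
Proof.
move=> hA hX hY.
rewrite /curv [alpha X * _]mulrC subrr sub0r hA; last exact: skew5_br5.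
by rewrite edual1_br5 // mulrN opprK.
Qed.

End SO5.

Unset Implicit Arguments.
Set Strict Implicit.

Theorem lemma4p5 (R : realFieldType) (u : R) (hu : u != 0)
    (alpha : 'M[R]_5 -> R) (hlin : linear_on_so5 alpha) :
  (inv_conn_trivial alpha <->
     exists a1 : R, forall X, skew5 X -> alpha X = a1 * edual 1 X * u) /\
  (inv_conn_trivial alpha ->
     exists c : R, forall X Y, in_m X -> in_m Y ->
       curv alpha X Y = c * omega X Y * u).
Proof.
have fwd : inv_conn_trivial alpha ->
    exists a1 : R, forall X, skew5 X -> alpha X = a1 * edual 1 X * u.
  move=> hinv; exists (alpha (ebasis R 1) / u) => X hX.
  by rewrite (inv_conn_trivial_edual1 hinv hX) mulrAC divfK // mulrC.
have scaled a1 : (forall X, skew5 X -> alpha X = a1 * edual 1 X * u) ->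
    forall X, skew5 X -> alpha X = a1 * u * edual 1 X.
  by move=> ha X hX; rewrite ha // mulrAC.
split.
  split=> [|[a1 /scaled ha]]; first exact: fwd.
  exact: edual1_multiple_inv_conn_trivial ha.
move=> /fwd[a1 /scaled ha]; exists a1 => X Y [hX _] [hY _].
by rewrite (curv_edual1 ha) // mulrAC.
Qed.
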